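(* Let $m,n$ be positive coprime integers with $1\le m/n\le 2$ and $3\nmid(m+n)$, let $\theta\in[\pi/3,\pi/2]$ satisfy $\cos\theta = \frac{|n^2+2mn-2m^2|}{2(m^2-mn+n^2)}$, and let $$\Gamma_\theta = \frac12\begin{bmatrix} m+n & m-2n\\ (m-n)\sqrt3 & m\sqrt3\end{bmatrix}\mathbb{Z}^2.$$ Then for every $\Omega\in C_h(\theta)$, $|\Gamma_\theta|\le|\Omega|$.
   Context: $\Lambda_h = \begin{bmatrix} 1 & -1/2 \\ 0 & \sqrt3/2\end{bmatrix}\mathbb{Z}^2$. For a full-rank lattice $\Gamma\subset\mathbb{R}^2$, $|\Gamma|=\min\{\|y\|^2:y\in\Gamma\setminus\{0\}\}$. $\Gamma$ is well-rounded (WR) if it has a basis of vectors of squared norm $|\Gamma|$; such a basis can be chosen with angle in $[\pi/3,\pi/2]$ between its vectors, and this angle $\theta(\Gamma)$ is an invariant. $\mathrm{WR}(\Lambda_h)$ is the set of full-rank WR sublattices of $\Lambda_h$, and $C_h(\theta)=\{\Omega\in\mathrm{WR}(\Lambda_h):\theta(\Omega)=\theta\}$. *)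

From Stdlib Require Import Reals Lra ZArith.
Open Scope R_scope.

Definition pt := (R * R)%type.
Definition dot (p q : pt) : R := fst p * fst q + snd p * snd q.
Definition norm2 (p : pt) : R := dot p p.
Definition det2 (u v : pt) : R := fst u * snd v - snd u * fst v.

Definition lat_gen (u v : pt) (p : pt) : Prop :=
  exists a b : Z, p = (IZR a * fst u + IZR b * fst v, IZR a * snd u + IZR b * snd v).

Definition is_basis (L : pt -> Prop) (u v : pt) : Prop :=
  det2 u v <> 0 /\ forall p, L p <-> lat_gen u v p.

Definition full_rank_lattice (L : pt -> Prop) : Prop := exists u v, is_basis L u v.

(* r = |L| = min of squared norms of nonzero vectors of L *)
Definition is_min_norm (L : pt -> Prop) (r : R) : Prop :=
  (exists y, L y /\ y <> (0,0) /\ norm2 y = r) /\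
  (forall y, L y -> y <> (0,0) -> r <= norm2 y).

Definition angle (u v : pt) : R := acos (dot u v / (sqrt (norm2 u) * sqrt (norm2 v))).

Definition Lambda_h : pt -> Prop := lat_gen (1, 0) (-1/2, sqrt 3 / 2).

Definition sublattice (O L : pt -> Prop) : Prop := forall p, O p -> L p.

Definition well_rounded (O : pt -> Prop) : Prop :=
  exists u v, is_basis O u v /\ is_min_norm O (norm2 u) /\ norm2 v = norm2 u.

Definition WR_h (O : pt -> Prop) : Prop :=
  full_rank_lattice O /\ sublattice O Lambda_h /\ well_rounded O.

Definition theta_of_is (O : pt -> Prop) (th : R) : Prop :=
  PI / 3 <= th <= PI / 2 /\
  exists u v, is_basis O u v /\ is_min_norm O (norm2 u) /\ norm2 v = norm2 u /\
              angle u v = th.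

Definition C_h (th : R) (O : pt -> Prop) : Prop := WR_h O /\ theta_of_is O th.

Definition Gamma_mn (m n : Z) : pt -> Prop :=
  lat_gen ((IZR m + IZR n) / 2, (IZR m - IZR n) * sqrt 3 / 2)
          ((IZR m - 2 * IZR n) / 2, IZR m * sqrt 3 / 2).

(* Every vector of Λ_h is a (a - b/2, b √3/2) with integers a, b, so its squared norm is the
   Löschian value a² - ab + b², and the determinant of two such vectors is (√3/2) B with B an
   integer.  For a minimal basis u, v of Ω ∈ C_h(θ) with |u|² = |v|² = W, the identity
   det² = W² sin²θ together with 4N² cos²θ = (n² + 2mn - 2m²)² and 4N² - (n² + 2mn - 2m²)² =
   3 n² (2m - n)², where N = m² - mn + n², gives (N B)² = (W n (2m - n))².  Since N is coprime
   to n and to 3, it is coprime to 2m - n, hence N divides W.  So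
   |Ω| = W ≥ N, while the first generator of Γ_θ has squared norm N. *)

From Stdlib Require Import Reals ZArith Znumtheory Lia Lra.
Open Scope R_scope.

Definition loeschian (a b : Z) : Z := (a * a - a * b + b * b)%Z.

Section Loeschian_arith.
Local Open Scope Z_scope.

Lemma loeschian_pos_r (m n : Z) : 0 < n -> 0 < loeschian m n.
Proof. unfold loeschian; nia. Qed.

Lemma rel_prime_add_mul_r (a k n : Z) : rel_prime a n -> rel_prime (a + k * n) n.
Proof.
rewrite <- !Zgcd_1_rel_prime. intro Han.
rewrite Z.gcd_comm, Z.gcd_add_mult_diag_r, Z.gcd_comm. exact Han.
Qed.

Lemma rel_prime_loeschian_r (m n : Z) : rel_prime m n -> rel_prime (loeschian m n) n.
Proof.
intro Hmn.
replace (loeschian m n) with (m * m + (n - m) * n) by (unfold loeschian; ring).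
apply rel_prime_add_mul_r, rel_prime_sym, rel_prime_mult; apply rel_prime_sym; exact Hmn.
Qed.

Lemma rel_prime_loeschian_3 (m n : Z) : ~ (3 | m + n) -> rel_prime (loeschian m n) 3.
Proof.
intro H3. apply rel_prime_sym, prime_rel_prime; [exact prime_3|].
intros [k Hk]. apply H3.
assert (Hsq : (3 | (m + n) * (m + n))) by (exists (k + m * n); unfold loeschian in Hk; lia).
destruct (prime_mult 3 prime_3 _ _ Hsq); assumption.
Qed.

(* 4 N = (2m - n)² + 3 n², so a common divisor of N and 2m - n divides 3 n². *)
Lemma rel_prime_loeschian_2m_n (m n : Z) :
  rel_prime m n -> ~ (3 | m + n) -> rel_prime (loeschian m n) (2 * m - n).
Proof.
intros Hmn H3.
assert (Hn : rel_prime (loeschian m n) (3 * (n * n))).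
{ apply rel_prime_mult; [apply rel_prime_loeschian_3; exact H3|].
  apply rel_prime_mult; apply rel_prime_loeschian_r; exact Hmn. }
destruct Hn as [_ _ Hcommon].
constructor; [apply Z.divide_1_l | apply Z.divide_1_l |].
intros d [k Hk] [l Hl]. apply Hcommon; [exists k; exact Hk|].
exists (4 * k - l * l * d). unfold loeschian in Hk. nia.
Qed.

Lemma loeschian_dvd_of_sq_eq (m n W B : Z) :
  rel_prime m n -> ~ (3 | m + n) ->
  loeschian m n * B * (loeschian m n * B) = W * (n * (2 * m - n)) * (W * (n * (2 * m - n))) ->
  (loeschian m n | W).
Proof.
intros Hmn H3 Hsq.
set (N := loeschian m n) in *.
assert (HNdvd : (N | (n * (2 * m - n)) * W)).
{ assert (Hfact : (N * B - W * (n * (2 * m - n))) * (N * B + W * (n * (2 * m - n))) = 0)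
    by nia.
  apply Z.mul_eq_0 in Hfact as [Hfact | Hfact];
    [exists B | exists (- B)]; lia. }
apply Gauss with (1 := HNdvd), rel_prime_mult.
- apply rel_prime_loeschian_r; exact Hmn.
- apply rel_prime_loeschian_2m_n; assumption.
Qed.

End Loeschian_arith.

Definition hex (a b : Z) : pt := (IZR a - IZR b / 2, IZR b * sqrt 3 / 2).

Lemma Lambda_h_hex (p : pt) : Lambda_h p -> exists a b, p = hex a b.
Proof.
intros [a [b ->]]. exists a, b. unfold hex; simpl. f_equal; field.
Qed.

Lemma sqrt3_sq : sqrt 3 ^ 2 = 3.
Proof. simpl. rewrite Rmult_1_r. apply sqrt_sqrt. lra. Qed.

Lemma norm2_hex (a b : Z) : norm2 (hex a b) = IZR (loeschian a b).
Proof.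
unfold norm2, dot, hex, loeschian; simpl.
rewrite plus_IZR, minus_IZR, !mult_IZR.
field_simplify. rewrite sqrt3_sq. field.
Qed.

Lemma det2_hex (a1 b1 a2 b2 : Z) :
  det2 (hex a1 b1) (hex a2 b2) = sqrt 3 / 2 * IZR (a1 * b2 - a2 * b1).
Proof. unfold det2, hex; simpl. rewrite minus_IZR, !mult_IZR. field. Qed.

Lemma lat_gen_l (u v : pt) : lat_gen u v u.
Proof. exists 1%Z, 0%Z. destruct u; simpl; f_equal; ring. Qed.

Lemma lat_gen_r (u v : pt) : lat_gen u v v.
Proof. exists 0%Z, 1%Z. destruct v; simpl; f_equal; ring. Qed.

Lemma lagrange_identity (u v : pt) :
  dot u v ^ 2 + det2 u v ^ 2 = norm2 u * norm2 v.
Proof. destruct u, v. unfold dot, det2, norm2, dot; simpl. ring. Qed.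

Lemma norm2_nonneg (u : pt) : 0 <= norm2 u.
Proof. destruct u. unfold norm2, dot; simpl. nra. Qed.

Lemma norm2_pos_of_det2 (u v : pt) :
  det2 u v <> 0 -> 0 < norm2 u /\ 0 < norm2 v.
Proof.
intro Hdet.
assert (Huv : 0 < norm2 u * norm2 v).
{ rewrite <- lagrange_identity.
  assert (0 < det2 u v ^ 2) by (rewrite <- Rsqr_pow2; apply Rsqr_pos_lt; exact Hdet).
  nra. }
pose proof (norm2_nonneg u). pose proof (norm2_nonneg v).
split; apply Rnot_le_lt; intro; nra.
Qed.

Lemma det2_sq_angle (u v : pt) : det2 u v <> 0 ->
  det2 u v ^ 2 = norm2 u * norm2 v * (1 - cos (angle u v) ^ 2).
Proof.
intro Hdet. destruct (norm2_pos_of_det2 u v Hdet) as [Hu Hv].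
pose proof (lagrange_identity u v) as HL.
set (r := sqrt (norm2 u) * sqrt (norm2 v)).
assert (Hr2 : r ^ 2 = norm2 u * norm2 v).
{ unfold r. rewrite Rpow_mult_distr, !pow2_sqrt; lra. }
assert (Hr : 0 < r) by (apply Rmult_lt_0_compat; apply sqrt_lt_R0; assumption).
assert (Hcos : cos (angle u v) = dot u v / r).
{ apply cos_acos.
  assert (Hbound : (dot u v / r) ^ 2 <= 1).
  { unfold Rdiv. rewrite Rpow_mult_distr, pow_inv, Hr2.
    apply (Rmult_le_reg_r (norm2 u * norm2 v)); [nra|].
    field_simplify; nra. }
  split; nra. }
rewrite Hcos. unfold Rdiv. rewrite Rpow_mult_distr, pow_inv, Hr2. field_simplify; nra.
Qed.

Lemma min_norm_unique (L : pt -> Prop) (a b : R) :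
  is_min_norm L a -> is_min_norm L b -> a = b.
Proof.
intros [[y [Hy [Hy0 <-]]] Ha] [[z [Hz [Hz0 <-]]] Hb].
specialize (Ha z Hz Hz0). specialize (Hb y Hy Hy0). lra.
Qed.

Lemma Gamma_min_norm_le (m n : Z) (g : R) :
  (0 < n)%Z -> is_min_norm (Gamma_mn m n) g -> g <= IZR (loeschian m n).
Proof.
intros Hn [_ Hmin].
set (u := ((IZR m + IZR n) / 2, (IZR m - IZR n) * sqrt 3 / 2)).
assert (Hu : norm2 u = IZR (loeschian m n)).
{ unfold norm2, dot, u, loeschian; simpl.
  rewrite plus_IZR, minus_IZR, !mult_IZR. field_simplify. rewrite sqrt3_sq. field. }
rewrite <- Hu. apply Hmin.
- apply lat_gen_l.
- intro Hu0. rewrite Hu0 in Hu.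
  pose proof (IZR_lt _ _ (loeschian_pos_r m n Hn)) as Hpos.
  unfold norm2, dot in Hu; simpl in Hu. lra.
Qed.

(* sin²θ = 1 - cos²θ = 3 n² (2m - n)² / (4 N²) turns det² = W² sin²θ into an integer identity. *)
Lemma sq_identity_of_cos (m n W B : Z) :
  (0 < loeschian m n)%Z ->
  (sqrt 3 / 2 * IZR B) ^ 2 =
    IZR W * IZR W *
    (1 - (Rabs (IZR (n * n + 2 * m * n - 2 * m * m)) / (2 * IZR (loeschian m n))) ^ 2) ->
  (loeschian m n * B * (loeschian m n * B) =
   W * (n * (2 * m - n)) * (W * (n * (2 * m - n))))%Z.
Proof.
intros HN Heq. apply IZR_lt in HN.
set (c := IZR (n * n + 2 * m * n - 2 * m * m)) in Heq.
assert (Hc : Rabs c ^ 2 = c ^ 2) by apply pow2_abs.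
set (N := IZR (loeschian m n)) in *.
assert (Hid : 4 * N ^ 2 - c ^ 2 = 3 * IZR (n * (2 * m - n)) ^ 2).
{ unfold N, c, loeschian. repeat rewrite ?plus_IZR, ?minus_IZR, ?mult_IZR. ring. }
assert (Hprod : 3 * (N * IZR B) ^ 2 = 3 * (IZR W * IZR (n * (2 * m - n))) ^ 2).
{ field_simplify in Heq; [| lra]. rewrite sqrt3_sq, Hc in Heq.
  apply (Rmult_eq_compat_r (4 * N ^ 2)) in Heq. field_simplify in Heq; [| lra].
  transitivity (IZR W ^ 2 * (4 * N ^ 2 - c ^ 2)); [lra | rewrite Hid; ring]. }
apply eq_IZR. rewrite !mult_IZR in *. fold N. nra.
Qed.

Theorem lemma4p8 (m n : Z) (th : R) :
  (0 < m)%Z -> (0 < n)%Z -> Z.gcd m n = 1%Z ->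
  (n <= m)%Z -> (m <= 2 * n)%Z -> ~ (3 | m + n)%Z ->
  PI / 3 <= th <= PI / 2 ->
  cos th = Rabs (IZR (n * n + 2 * m * n - 2 * m * m))
           / (2 * IZR (m * m - m * n + n * n)) ->
  forall O : pt -> Prop, C_h th O ->
  forall g w : R, is_min_norm (Gamma_mn m n) g -> is_min_norm O w -> g <= w.
Proof.
intros _ Hn Hgcd _ _ H3 _ Hcos O [[_ [Hsub _]] [_ [u [v [[Hdet Hbas] [Hmin [Hvu Hang]]]]]]]
  g w Hg Hw.
rewrite <- (min_norm_unique _ _ _ Hmin Hw).
apply Rle_trans with (1 := Gamma_min_norm_le m n g Hn Hg).
destruct (norm2_pos_of_det2 u v Hdet) as [Hu _].
destruct (Lambda_h_hex u (Hsub u (proj2 (Hbas u) (lat_gen_l u v)))) as [a1 [b1 ->]].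
destruct (Lambda_h_hex v (Hsub v (proj2 (Hbas v) (lat_gen_r _ v)))) as [a2 [b2 ->]].
rewrite !norm2_hex in Hu, Hvu; rewrite norm2_hex in Hvu |- *.
apply IZR_le, Z.divide_pos_le; [apply lt_IZR; exact Hu|].
apply loeschian_dvd_of_sq_eq with (a1 * b2 - a2 * b1)%Z;
  [apply Zgcd_1_rel_prime; exact Hgcd | exact H3 |].
apply sq_identity_of_cos; [apply loeschian_pos_r; exact Hn|].
rewrite <- det2_hex, det2_sq_angle by exact Hdet.
rewrite !norm2_hex, Hvu, Hang, Hcos. reflexivity.
Qed.
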